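(* Suppose $X,Y,Z \in \Omega(\Sigma)$ are three complementary regions meeting at a vertex $v \in V(\Sigma)$, and that the arrows on the edges $X \cap Y$ and $X \cap Z$ arising from the flow $f_\rho$ both point away from $v$. Then either $|x| \le 2$, or $y=z=0$.
   Context: Let $T$ be the one-holed torus with fundamental group $\pi$ free on two generators, and let $\rho:\pi\to \mathrm{SL}(2,\mathbb{C})$ be a representation (character) with $\operatorname{tr}\rho(XYX^{-1}Y^{-1})=\kappa$ for a pair of generators $X,Y$, where $\kappa \neq 2$. Let $\mathscr{C}$ be the set of free homotopy classes of essential simple closed curves on $T$, identified with the vertices of the Farey tessellation of the hyperbolic plane; let $\Sigma$ be the dual infinite trivalent tree, with vertex set $V(\Sigma)$, edge set $E(\Sigma)$, and set of complementary regions $\Omega(\Sigma)$, so that $\Omega(\Sigma)$ is in natural bijection with $\mathscr{C}$, vertices of $\Sigma$ correspond to triples of pairwise adjacent regions (generating triples), and each edge $e$ corresponds to a generating quadruple $(X,Y;Z,Z')$: $e=X\cap Y$ is the common boundary of regions $X,Y$, and $Z,Z'$ are the two regions meeting the two endpoints of $e$. The Fricke trace map $\phi:\Omega(\Sigma)\to\mathbb{C}$ is $\phi(W)=\operatorname{tr}\rho(W)$, and we write $x=\phi(X)$, $y=\phi(Y)$, $z=\phi(Z)$, etc. It satisfies the edge relation $z+z'=xy$ for every generating quadruple $(X,Y;Z,Z')$. The flow $f_\rho$ assigns to each edge $e \leftrightarrow (X,Y;Z,Z')$ the direction pointing from $Z$ towards $Z'$ if $|z|\ge|z'|$ (i.e.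 from the region with larger $|\phi|$ to the one with smaller $|\phi|$; ties are directed arbitrarily). *)

From HB Require Import structures.
From mathcomp Require Import all_boot all_order all_algebra.
From mathcomp Require Import complex.
From mathcomp Require Import reals.
Set Implicit Arguments. Unset Strict Implicit. Unset Printing Implicit Defensive.
Import Order.TTheory GRing.Theory Num.Theory.
Local Open Scope ring_scope.

(* Letters of the free group F_2 = <a, b> and its (not necessarily reduced) words. *)
Inductive letter := La | Lai | Lb | Lbi.
Definition word := seq letter.

Definition letter_inv (l : letter) : letter :=
  match l with La => Lai | Lai => La | Lb => Lbi | Lbi => Lb end.

Definition winv (w : word) : word := rev (map letter_inv w).

(* Generating pairs (free bases) of F_2: the orbit of (a, b) under the
   elementary Nielsen transformations, which generate Aut(F_2). *)
Inductive gen_pair : word -> word -> Prop :=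
| gp_base : gen_pair [:: La] [:: Lb]
| gp_swap X Y : gen_pair X Y -> gen_pair Y X
| gp_inv X Y : gen_pair X Y -> gen_pair (winv X) Y
| gp_mul X Y : gen_pair X Y -> gen_pair (X ++ Y) Y.

Definition SL2 (R : realType) (M : 'M[R[i]]_2) : Prop := \det M = 1.

Definition rho_letter (R : realType) (A B : 'M[R[i]]_2) (l : letter) : 'M[R[i]]_2 :=
  match l with
  | La => A | Lai => invmx A | Lb => B | Lbi => invmx B
  end.

Definition rho (R : realType) (A B : 'M[R[i]]_2) (w : word) : 'M[R[i]]_2 :=
  foldr (fun l M => rho_letter A B l *m M) 1%:M w.

Definition trw (R : realType) (A B : 'M[R[i]]_2) (w : word) : R[i] :=
  \tr (rho A B w).

(* The flow on the edge e of a generating quadruple (X,Y;Z,Z'):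
   [flow_dir z z' d] says that the boolean [d] ("the arrow on e points from
   Z towards Z'") is an admissible choice of the flow f_rho: it points from the
   region with larger |phi| to the one with smaller |phi|, ties arbitrary. *)
Definition flow_dir (R : realType) (z z' : R[i]) (d : bool) : Prop :=
  (`|z'| < `|z| -> d = true) /\ (`|z| < `|z'| -> d = false).

(** Cayley–Hamilton in SL(2) gives the Fricke relations [z + z' = x y] on
    both edges: [tr(X Y^-1) = x y - z] and [tr(X X Y) = x z - y].  An arrow
    pointing away from [v] means [|z'| <= |z|], resp. [|y'| <= |y|], so the
    triangle inequality yields [|x| |y| <= 2 |z|] and [|x| |z| <= 2 |y|].
    Chaining the two, [|x|^2 |y| <= 4 |y|], which for [|x| > 2] forces
    [y = 0] and then [z = 0]. *)
From HB Require Import structures.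
From mathcomp Require Import all_boot all_order all_algebra.
From mathcomp Require Import complex.
From mathcomp Require Import reals.
From mathcomp Require Import ring.
Set Implicit Arguments. Unset Strict Implicit.
Import Order.TTheory GRing.Theory Num.Theory.
Local Open Scope ring_scope.

Section TwoByTwo.
Variable R : comNzRingType.
Implicit Types M N : 'M[R]_2.

Lemma ord2P (P : 'I_2 -> Prop) : P 0 -> P 1 -> forall i, P i.
Proof.
move=> P0 P1 [[|[|k]] lt_k2] //.
- by rewrite (_ : Ordinal lt_k2 = 0) //; apply: val_inj.
- by rewrite (_ : Ordinal lt_k2 = 1) //; apply: val_inj.
Qed.

Lemma det_mx2 M : \det M = M 0 0 * M 1 1 - M 0 1 * M 1 0.
Proof.
rewrite (expand_det_row _ ord0) !big_ord_recr big_ord0 /= /cofactor.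
rewrite !det_mx11 !mxE /= add0r expr0 expr1 mul1r mulN1r mulrN.
by congr (_ * _ - _ * _); congr (M _ _); apply: val_inj.
Qed.

Lemma mxtrace_mx2 M : \tr M = M 0 0 + M 1 1.
Proof.
rewrite /mxtrace !big_ord_recr big_ord0 /= add0r.
by congr (_ + _); congr (M _ _); apply: val_inj.
Qed.

Lemma mulmx2E M N i j : (M *m N) i j = M i 0 * N 0 j + M i 1 * N 1 j.
Proof.
rewrite mxE !big_ord_recr big_ord0 /= add0r.
by congr (M i _ * N _ j + M i _ * N _ j); apply: val_inj.
Qed.

Lemma Cayley_Hamilton_mx2 M : M *m M = \tr M *: M - (\det M)%:M.
Proof.
apply/matrixP; apply: ord2P; apply: ord2P;
  by rewrite mulmx2E !mxE det_mx2 mxtrace_mx2 /=; ring.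
Qed.

Lemma mxtrace_mulmx_sq M N : \tr (M *m (M *m N)) = \tr M * \tr (M *m N) - \det M * \tr N.
Proof.
rewrite mulmxA Cayley_Hamilton_mx2 mulmxBl -scalemxAl mul_scalar_mx.
by rewrite raddfB /= !mxtraceZ.
Qed.

(* Every left inverse of [N] equals [tr N - N], by Cayley–Hamilton. *)
Lemma mxtrace_mulmx_linv M N (N' : 'M[R]_2) :
  \det N = 1 -> N' *m N = 1%:M -> \tr (M *m N') = \tr M * \tr N - \tr (M *m N).
Proof.
move=> detN1 N'N1.
have NC1 : N *m (\tr N *: 1%:M - N) = 1%:M.
  rewrite mulmxBr Cayley_Hamilton_mx2 detN1 -scalemxAr mulmx1.
  by rewrite opprB addrC subrK.
have -> : N' = \tr N *: 1%:M - N by rewrite -[LHS]mulmx1 -{1}NC1 mulmxA N'N1 mul1mx.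
by rewrite mulmxBr -scalemxAr mulmx1 raddfB /= mxtraceZ mulrC.
Qed.

End TwoByTwo.

Section Representation.
Variable R : realType.
Variables A B : 'M[R[i]]_2.
Hypotheses (hA : SL2 A) (hB : SL2 B).

Lemma rho_cat u v : rho A B (u ++ v) = rho A B u *m rho A B v.
Proof. by elim: u => [|l u IHu] /=; rewrite ?mul1mx // IHu mulmxA. Qed.

Lemma rho_letter_invK l : rho_letter A B (letter_inv l) *m rho_letter A B l = 1%:M.
Proof.
have unitA : A \in unitmx by rewrite unitmxE hA unitr1.
have unitB : B \in unitmx by rewrite unitmxE hB unitr1.
by case: l => /=; rewrite ?mulVmx ?mulmxV.
Qed.

Lemma rho_winvK w : rho A B (winv w) *m rho A B w = 1%:M.
Proof.
elim: w => [|l w IHw] /=; first by rewrite mul1mx.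
rewrite /winv /= rev_cons -cats1 rho_cat /= mulmx1.
by rewrite -mulmxA (mulmxA _ (rho_letter A B l)) rho_letter_invK mul1mx.
Qed.

Lemma SL2_rho w : SL2 (rho A B w).
Proof.
rewrite /SL2; elim: w => [|l w IHw] /=; first by rewrite det1.
by rewrite det_mulmx IHw mulr1; case: l => /=; rewrite ?det_inv ?hA ?hB ?invr1.
Qed.

Lemma trw_cat_winv u v : trw A B (u ++ winv v) = trw A B u * trw A B v - trw A B (u ++ v).
Proof. by rewrite /trw !rho_cat (mxtrace_mulmx_linv (rho A B u) (SL2_rho v) (rho_winvK v)). Qed.

Lemma trw_cat_sq u v : trw A B (u ++ (u ++ v)) = trw A B u * trw A B (u ++ v) - trw A B v.
Proof. by rewrite /trw !rho_cat mxtrace_mulmx_sq (SL2_rho u) mul1r. Qed.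

End Representation.

Lemma flow_dir_true (R : realType) (z z' : R[i]) : flow_dir z z' true -> `|z'| <= `|z|.
Proof. by case=> _ not_lt; rewrite real_leNgt ?normr_real //; apply/negP => /not_lt. Qed.

Lemma edge_norm_bound (F : numDomainType) (x y z z' : F) :
  z + z' = x * y -> `|z'| <= `|z| -> `|x| * `|y| <= 2 * `|z|.
Proof.
move=> edge le_z'z; rewrite -normrM -edge mulr2n mulrDl mul1r.
by apply: (le_trans (ler_normD z z')); rewrite lerD2l.
Qed.

Lemma cross_bounds_eq0 (F : numDomainType) (a b c : F) :
  2 < a -> 0 <= b -> 0 <= c -> a * b <= 2 * c -> a * c <= 2 * b -> b = 0 /\ c = 0.
Proof.
move=> a_gt2 b_ge0 c_ge0 le_ab le_ac.
have a_gt0 : 0 < a by apply: lt_trans a_gt2.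
have le_aab : a * (a * b) <= 2 * (2 * b).
  apply: (le_trans (ler_wpM2l (ltW a_gt0) le_ab)).
  by rewrite mulrCA ler_wpM2l.
have aa_gt4 : 0 < a * a - 2 * 2 by rewrite subr_gt0 ltr_pM.
have b0 : b = 0.
  apply/le_anti; rewrite b_ge0 andbT -(pmulr_rle0 _ aa_gt4).
  by rewrite mulrBl subr_le0 -!mulrA.
split=> //; apply/le_anti; rewrite c_ge0 andbT -(pmulr_rle0 _ a_gt0).
by move: le_ac; rewrite b0 mulr0.
Qed.

Lemma norm_le2_or_eq0 (F : numDomainType) (x y z : F) :
  `|x| * `|y| <= 2 * `|z| -> `|x| * `|z| <= 2 * `|y| -> `|x| <= 2 \/ (y = 0 /\ z = 0).
Proof.
move=> le_xy le_xz; have [|x_gt2] := real_leP (normr_real x) (realn _ 2); first by left.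
have [y0 z0] := cross_bounds_eq0 x_gt2 (normr_ge0 y) (normr_ge0 z) le_xy le_xz.
by right; split; apply/normr0_eq0.
Qed.

Theorem proposition3p3 (R : realType) (A B : 'M[R[i]]_2)
  (hA : SL2 A) (hB : SL2 B)
  (hkappa : \tr (A *m B *m invmx A *m invmx B) != 2)
  (X Y : word) (hXY : gen_pair X Y)
  (dXY dXZ : bool)
  (hfXY : flow_dir (trw A B (X ++ Y)) (trw A B (X ++ winv Y)) dXY)
  (hfXZ : flow_dir (trw A B Y) (trw A B (X ++ (X ++ Y))) dXZ) :
  dXY = true -> dXZ = true ->
  `|trw A B X| <= 2 \/ (trw A B Y = 0 /\ trw A B (X ++ Y) = 0).
Proof.
move=> dXY_true dXZ_true; subst dXY dXZ.
set x := trw A B X; set y := trw A B Y; set z := trw A B (X ++ Y).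
have edgeXY : z + trw A B (X ++ winv Y) = x * y.
  by rewrite trw_cat_winv // addrC subrK.
have edgeXZ : y + trw A B (X ++ (X ++ Y)) = x * z.
  by rewrite trw_cat_sq // addrC subrK.
have le_xy := edge_norm_bound edgeXY (flow_dir_true hfXY).
have le_xz := edge_norm_bound edgeXZ (flow_dir_true hfXZ).
exact: norm_le2_or_eq0.
Qed.
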